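(* Let $S$ be a formula. Then $\mathbb{C}[D]\otimes S$, with the extended products and the operator $D$, satisfies the half Jacobi identity (i.e. is a VLA-SS) if and only if for all homogeneous $u,v,w\in S$ and all $m,n\in\mathbb{N}$ one has, in $\mathbb{C}[D]\otimes S$, $$u_m(v_nw)-\varepsilon_{u,v}v_n(u_mw)=\sum_{i\ge0}\binom{m}{i}(u_iv)_{m+n-i}w .$$
   Context: All spaces over $\mathbb{C}$; $\mathbb{N}=\{0,1,2,\dots\}$; $\varepsilon_{u,v}=(-1)^{|u||v|}$. A formula is a $\mathbb{Z}_2$-graded space $S$ with parity-preserving linear maps $F_n:S\otimes S\to\mathbb{C}[D]\otimes S$ ($n\in\mathbb{N}$; $\mathbb{C}[D]$ even) with $F_n(u,v)=0$ for $n$ large; write $u_nv=F_n(u,v)$, identify $S=1\otimes S$, $D(D^k\otimes u)=D^{k+1}\otimes u$. The products extend uniquely to bilinear products $A_nB$ ($n\in\mathbb{N}$) on $\mathbb{C}[D]\otimes S$ with $(DA)_nB=-nA_{n-1}B$ and $D(A_nB)=(DA)_nB+A_n(DB)$; explicitly $\sum_{n\ge0}(P(D)u)_n(Q(D)v)z^{-n-1}=P(\frac{d}{dz})Q(D-\frac{d}{dz})\sum_{n\ge0}(u_nv)z^{-n-1}$. A VLA-SS is a $\mathbb{Z}_2$-graded space $U$ with an even operator $D$ and bilinear products $u_nv$ ($n\in\mathbb{N}$) such that for homogeneous $u,v,w$: $u_nv=0$ for $n$ large; $|u_nv|=|u|+|v|$; $(Du)_nv=-nu_{n-1}v$ and $D(u_nv)=(Du)_nv+u_n(Dv)$;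 and the half Jacobi identity: for all $k,m,n\in\mathbb{N}$, $\sum_{i\ge0}(-1)^i\binom{k}{i}(u_{m+k-i}(v_{n+i}w)-\varepsilon_{u,v}(-1)^kv_{n+k-i}(u_{m+i}w))=\sum_{i\ge0}\binom{m}{i}(u_{k+i}v)_{m+n-i}w$. *)

From HB Require Import structures.
From mathcomp Require Import all_boot all_order all_algebra.
Set Implicit Arguments.
Unset Strict Implicit.
Unset Printing Implicit Defensive.
Import GRing.Theory.
Local Open Scope ring_scope.

Section CDS.
Variables (K : fieldType) (S : lmodType K).

(* An element of C[D] (x) S is represented by a sequence s : seq S,
   standing for  \sum_j D^j (x) s`_j .  Two representations denote the same
   element iff all their coefficients agree (trailing zeros are irrelevant). *)
Definition cdeq (s t : seq S) : Prop := forall j : nat, nth 0 s j = nth 0 t j.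

Definition cdadd (s t : seq S) : seq S :=
  mkseq (fun j => nth 0 s j + nth 0 t j) (maxn (size s) (size t)).
Definition cdscale (a : K) (s : seq S) : seq S := map (fun x => a *: x) s.
Definition cdDn (e : nat) (s : seq S) : seq S := ncons e 0 s.

Definition cdsum (n : nat) (f : nat -> seq S) : seq S :=
  \big[cdadd/[::]]_(i < n) f i.

(* A formula: Z2-graded space S (parity components par false / par true,
   S = S_0 (+) S_1) with parity-preserving bilinear maps
   F_n : S (x) S -> C[D] (x) S, vanishing for n large. *)
Record formula := Formula {
  par : bool -> pred S;
  par_lin : forall b (a : K) (x y : S), par b x -> par b y -> par b (a *: x + y);
  par_0 : forall b, par b 0;
  par_span : forall x : S, exists x0 x1, [/\ par false x0, par true x1 & x = x0 + x1];
  par_inter : forall x : S, par false x -> par true x -> x = 0;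
  fprod : nat -> S -> S -> seq S;
  fprod_linl : forall n (a : K) (u u' v : S) j,
      nth 0 (fprod n (a *: u + u') v) j = a *: nth 0 (fprod n u v) j + nth 0 (fprod n u' v) j;
  fprod_linr : forall n (a : K) (u v v' : S) j,
      nth 0 (fprod n u (a *: v + v')) j = a *: nth 0 (fprod n u v) j + nth 0 (fprod n u v') j;
  fprod_parity : forall (a b : bool) (u v : S) n j,
      par a u -> par b v -> par (a (+) b) (nth 0 (fprod n u v) j);
  fprod_vanish : forall u v : S, exists N : nat,
      forall n j, (N <= n)%N -> nth 0 (fprod n u v) j = 0
}.

(* The extended products A_n B on C[D] (x) S.  They are determined by
   bilinearity from the closed form (obtained from
   (DA)_n B = -n A_{n-1} B,  A_n (DB) = D(A_n B) + n A_{n-1} B,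
   equivalently from the P(d/dz) Q(D - d/dz) formula):
     (D^k u)_n (D^l v)
       = (-1)^k n^_k \sum_{i<=l} C(l,i) (n-k)^_i D^{l-i} (u_{n-k-i} v),
   where x^_k is the falling factorial (zero when k > x). *)
Definition ext_prod (F : formula) (n : nat) (A B : seq S) : seq S :=
  cdsum (size A) (fun k =>
  cdsum (size B) (fun l =>
  cdsum l.+1 (fun i =>
    cdscale ((-1) ^+ k * ((n ^_ k)%N)%:R * ('C(l, i))%:R * (((n - k) ^_ i)%N)%:R)
      (cdDn (l - i) (fprod F (n - k - i) (nth 0 A k) (nth 0 B l)))))).

Definition cd_hom (F : formula) (b : bool) (A : seq S) : Prop :=
  forall j, par F b (nth 0 A j).

Definition eps (a b : bool) : K := (-1) ^+ (a && b).

Definition ext_half_jacobi (F : formula) : Prop :=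
  forall (a b c : bool) (A B C : seq S),
    cd_hom F a A -> cd_hom F b B -> cd_hom F c C ->
    forall k m n : nat,
      cdeq
        (cdsum k.+1 (fun i =>
           cdscale ((-1) ^+ i * ('C(k, i))%:R)
             (cdadd (ext_prod F (m + k - i) A (ext_prod F (n + i) B C))
                    (cdscale (- (eps a b * (-1) ^+ k))
                       (ext_prod F (n + k - i) B (ext_prod F (m + i) A C))))))
        (cdsum m.+1 (fun i =>
           cdscale ('C(m, i))%:R
             (ext_prod F (m + n - i) (ext_prod F (k + i) A B) C))).

(* The condition of Proposition 7.7 on homogeneous u, v, w in S
   (computed in C[D] (x) S, S embedded as degree-0 elements [:: u]). *)
Definition formula_jacobi_cond (F : formula) : Prop :=
  forall (a b c : bool) (u v w : S),
    par F a u -> par F b v -> par F c w ->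
    forall m n : nat,
      cdeq
        (cdadd (ext_prod F m [:: u] (ext_prod F n [:: v] [:: w]))
               (cdscale (- eps a b) (ext_prod F n [:: v] (ext_prod F m [:: u] [:: w]))))
        (cdsum m.+1 (fun i =>
           cdscale ('C(m, i))%:R
             (ext_prod F (m + n - i) (ext_prod F i [:: u] [:: v]) [:: w]))).

End CDS.

(* The extended products are sesquilinear, (DA)_n B = -n A_{n-1} B and
   A_n (DB) = D (A_n B) + n A_{n-1} B, so for k = 0 both sides of the half
   Jacobi identity transform in the same way when any of A, B, C is replaced by
   D A, D B, D C; the binomial identities i C(m,i) = m C(m-1,i-1) and
   (m+n-i) C(m,i) = m C(m-1,i) + n C(m,i) make the two transforms agree.
   Homogeneous elements of C[D] (x) S are generated from S by sums and D, so
   the identity for k = 0 on S propagates to C[D] (x) S.  Finally both sides of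
   the half Jacobi identity, as functions X(k,m,n), obey
   X(k+1,m,n) = X(k,m+1,n) - X(k,m,n+1), hence the case k = 0 gives all k. *)

From Pilot Require Import Defs.
From mathcomp Require Import all_boot all_order all_algebra.
From mathcomp Require Import zify ring.
(* Re-imported so that [fprod] is the formula's product, not finfun's [fprod]. *)
Import Pilot.Defs.
Set Implicit Arguments.
Unset Strict Implicit.
Unset Printing Implicit Defensive.
Import GRing.Theory.
Local Open Scope ring_scope.

Lemma ffactD (n k m : nat) : (n ^_ (k + m) = n ^_ k * (n - k) ^_ m)%N.
Proof.
elim: k n => [|k IH] n; first by rewrite mul1n subn0.
rewrite addSn !ffactnS IH mulnA; congr (_ * _ ^_ _); lia.
Qed.

Lemma sumr_ord_widen (V : nmodType) n N (f : nat -> V) :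
  (n <= N)%N -> (forall k, (n <= k)%N -> f k = 0) ->
  \sum_(k < n) f k = \sum_(k < N) f k.
Proof.
move=> le_nN f0; rewrite (big_ord_widen N f le_nN) big_mkcond.
by apply: eq_bigr => k _; case: ltnP => // /f0.
Qed.

Lemma scalerBCA (R : comPzRingType) (V : lmodType R) (a e : R) (x y : V) :
  a *: x - e *: (a *: y) = a *: (x - e *: y).
Proof. by rewrite scalerBr !scalerA mulrC. Qed.

Section BinomialSums.
Variables (R : pzRingType) (V : lmodType R).
Implicit Types (f h : nat -> nat -> V) (k m n : nat).

Definition binom_sum h k m n : V :=
  \sum_(i < m.+1) 'C(m, i)%:R *: h (k + i)%N (m + n - i)%N.

Definition alt_binom_sum f k m n : V :=
  \sum_(i < k.+1) ((-1) ^+ i * 'C(k, i)%:R) *: f (m + k - i)%N (n + i)%N.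

Lemma alt_binom_sumS f k m n :
  alt_binom_sum f k.+1 m n = alt_binom_sum f k m.+1 n - alt_binom_sum f k m n.+1.
Proof.
rewrite /alt_binom_sum big_ord_recl.
under eq_bigr do rewrite /bump /= binS natrD mulrDr scalerDl.
rewrite big_split /= addrA; congr (_ + _).
  rewrite [in RHS]big_ord_recl big_ord_recr /= (bin_small (ltnSn k)) mulr0 scale0r addr0.
  by rewrite !bin0 addn0 !subn0 addSn addnS.
rewrite -sumrN; apply: eq_bigr => i _.
rewrite /bump /= add1n exprS mulN1r mulNr scaleNr.
by rewrite addnS subSS addSn addnS.
Qed.

Lemma binom_sumS h k m n :
  binom_sum h k.+1 m n = binom_sum h k m.+1 n - binom_sum h k m n.+1.
Proof.
apply/eqP; rewrite eq_sym subr_eq; apply/eqP.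
rewrite /binom_sum big_ord_recl.
under eq_bigr do rewrite /bump /= binS natrD scalerDl.
rewrite big_split /= addrA addrC; congr (_ + _).
  by apply: eq_bigr => i _; rewrite /bump /= addnS addSn subSS.
rewrite [in RHS]big_ord_recl big_ord_recr /= (bin_small (ltnSn m)) scale0r addr0.
by rewrite !bin0 addn0 !subn0 addSn addnS.
Qed.

Lemma half_jacobi_from_base (e : R) f f' h :
  (forall m n, f m n - e *: f' n m = binom_sum h 0 m n) ->
  forall k m n,
    alt_binom_sum f k m n - (e * (-1) ^+ k) *: alt_binom_sum f' k n m =
    binom_sum h k m n.
Proof.
move=> base; elim=> [|k IHk] m n.
  rewrite /alt_binom_sum !big_ord1 /= !expr0 !bin0 !mulr1n !mulr1 !scale1r.
  by rewrite !addn0 !subn0.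
rewrite !alt_binom_sumS binom_sumS -!IHk exprS mulN1r mulrN scaleNr opprK.
by rewrite scalerBr opprB addrACA [RHS]addrACA (addrC (- _)).
Qed.

Lemma binom_sum_pred_fst h m n :
  \sum_(i < m.+1) 'C(m, i)%:R *: (i%:R *: h i.-1 (m + n - i)%N) =
  m%:R *: binom_sum h 0 m.-1 n.
Proof.
case: m => [|m]; first by rewrite big_ord1 !scale0r scaler0.
rewrite big_ord_recl /= scale0r scaler0 add0r /binom_sum scaler_sumr.
apply: eq_bigr => i _; rewrite /bump /= add1n !scalerA -!natrM.
by rewrite addSn subSS mulnC (mul_bin_diag m.+1 i).
Qed.

Lemma binom_sum_pred_snd h m n :
  \sum_(i < m.+1) 'C(m, i)%:R *: ((m + n - i)%:R *: h i (m + n - i).-1) =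
  m%:R *: binom_sum h 0 m.-1 n + n%:R *: binom_sum h 0 m n.-1.
Proof.
rewrite /binom_sum !scaler_sumr.
transitivity (\sum_(i < m.+1) (m * 'C(m.-1, i))%:R *: h i (m + n - i).-1 +
              \sum_(i < m.+1) (n * 'C(m, i))%:R *: h i (m + n - i).-1).
  rewrite -big_split; apply: eq_bigr => i _ /=.
  rewrite scalerA -natrM -scalerDl -natrD mul_bin_down -mulnDl mulnC.
  by congr ((_ * _)%:R *: _); have := ltn_ord i; lia.
congr (_ + _).
  case: m => [|m]; first by rewrite !big1 // => i _; rewrite ?mul0n scale0r.
  rewrite big_ord_recr /= bin_small // muln0 scale0r addr0.
  apply: eq_bigr => i _ /=; rewrite scalerA -natrM.
  by congr (_ *: h _ _); have := ltn_ord i; lia.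
case: n => [|n]; first by rewrite !big1 // => i _; rewrite ?mul0n scale0r.
apply: eq_bigr => i _ /=; rewrite scalerA -natrM mulnC.
by congr (_ *: h _ _); have := ltn_ord i; lia.
Qed.

End BinomialSums.

Section Coefficients.
Variables (K : fieldType) (S : lmodType K).
Implicit Types (s t : seq S).

Lemma nth_cdadd s t j : nth 0 (cdadd s t) j = nth 0 s j + nth 0 t j.
Proof.
rewrite /cdadd; have [lt_j|] := ltnP j (maxn (size s) (size t)).
  by rewrite nth_mkseq.
rewrite geq_max => /andP[ge_s ge_t].
by rewrite !nth_default ?size_mkseq ?geq_max ?ge_s // addr0.
Qed.

Lemma size_cdadd s t : size (cdadd s t) = maxn (size s) (size t).
Proof. exact: size_mkseq. Qed.

Lemma nth_cdscale a s j : nth 0 (cdscale a s) j = a *: nth 0 s j.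
Proof.
rewrite /cdscale; have [lt_j|ge_j] := ltnP j (size s); first by rewrite (nth_map 0).
by rewrite !nth_default ?size_map // scaler0.
Qed.

Lemma nth_cdDn e s j : nth 0 (cdDn e s) j = if (j < e)%N then 0 else nth 0 s (j - e).
Proof. exact: nth_ncons. Qed.

Lemma nth_cdsum n (f : nat -> seq S) j :
  nth 0 (cdsum n f) j = \sum_(i < n) nth 0 (f i) j.
Proof.
apply: (big_morph (fun s => nth 0 s j)); last by rewrite nth_nil.
by move=> s t; rewrite nth_cdadd.
Qed.

End Coefficients.

Section ExtendedProducts.
Variables (K : fieldType) (S : lmodType K) (F : formula S).
Implicit Types (x y : S) (A B C : seq S).
Local Notation ep := (ext_prod F).

Lemma fprod0l n y j : nth 0 (fprod F n 0 y) j = 0.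
Proof.
move: (fprod_linl F n 1 0 0 y j); rewrite scaler0 addr0 scale1r.
by rewrite -{1}[nth 0 _ j]addr0 => /addrI <-.
Qed.

Lemma fprod0r n x j : nth 0 (fprod F n x 0) j = 0.
Proof.
move: (fprod_linr F n 1 x 0 0 j); rewrite scaler0 addr0 scale1r.
by rewrite -{1}[nth 0 _ j]addr0 => /addrI <-.
Qed.

Definition mono_coef n k l i : K := (-1) ^+ k * (n ^_ k * 'C(l, i) * (n - k) ^_ i)%:R.

Lemma mono_coefSk n k l i : mono_coef n.+1 k.+1 l i = - n.+1%:R * mono_coef n k l i.
Proof. rewrite /mono_coef ffactSS subSS exprS !natrM; ring. Qed.

Lemma mono_coefSl n k l i :
  mono_coef n k l.+1 i.+1 = mono_coef n k l i.+1 + n%:R * mono_coef n.-1 k l i.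
Proof.
have ffactS : (n ^_ k * (n - k) ^_ i.+1 = n * (n.-1 ^_ k * (n.-1 - k) ^_ i))%N.
  by rewrite -!ffactD addnS ffactnS.
rewrite /mono_coef binS mulnDr mulnDl natrD mulrDr; congr (_ + _).
rewrite mulrCA -natrM; congr (_ * _%:R).
by rewrite mulnAC ffactS -mulnA mulnAC.
Qed.

(* The [j]-th coefficient of [(D^k x)_n (D^l y)]. *)
Definition mono_prod n k l x y j : S :=
  \sum_(i < l.+1) mono_coef n k l i *:
     nth 0 (cdDn (l - i) (fprod F (n - k - i) x y)) j.

Lemma mono_prod0l n k l y j : mono_prod n k l 0 y j = 0.
Proof. by apply: big1 => i _; rewrite nth_cdDn; case: ifP; rewrite ?fprod0l scaler0. Qed.

Lemma mono_prod0r n k l x j : mono_prod n k l x 0 j = 0.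
Proof. by apply: big1 => i _; rewrite nth_cdDn; case: ifP; rewrite ?fprod0r scaler0. Qed.

Lemma mono_prodDl n k l x x' y j :
  mono_prod n k l (x + x') y j = mono_prod n k l x y j + mono_prod n k l x' y j.
Proof.
rewrite -big_split; apply: eq_bigr => i _ /=.
rewrite !nth_cdDn; case: ifP => _; first by rewrite scaler0 addr0.
by rewrite -[x in x + x']scale1r fprod_linl scale1r scalerDr.
Qed.

Lemma mono_prodDr n k l x y y' j :
  mono_prod n k l x (y + y') j = mono_prod n k l x y j + mono_prod n k l x y' j.
Proof.
rewrite -big_split; apply: eq_bigr => i _ /=.
rewrite !nth_cdDn; case: ifP => _; first by rewrite scaler0 addr0.
by rewrite -[y in y + y']scale1r fprod_linr scale1r scalerDr.
Qed.

Lemma mono_prodZl n k l a x y j :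
  mono_prod n k l (a *: x) y j = a *: mono_prod n k l x y j.
Proof.
rewrite scaler_sumr; apply: eq_bigr => i _ /=.
rewrite !nth_cdDn; case: ifP => _; first by rewrite !scaler0.
by rewrite -[a *: x]addr0 fprod_linl fprod0l addr0 !scalerA mulrC.
Qed.

Lemma mono_prodZr n k l a x y j :
  mono_prod n k l x (a *: y) j = a *: mono_prod n k l x y j.
Proof.
rewrite scaler_sumr; apply: eq_bigr => i _ /=.
rewrite !nth_cdDn; case: ifP => _; first by rewrite !scaler0.
by rewrite -[a *: y]addr0 fprod_linr fprod0r addr0 !scalerA mulrC.
Qed.

Lemma mono_prodSk n k l x y j :
  mono_prod n k.+1 l x y j = - n%:R *: mono_prod n.-1 k l x y j.
Proof.
case: n => [|n].
  rewrite oppr0 scale0r; apply: big1 => i _.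
  by rewrite /mono_coef ffact0n !mul0n mulr0 scale0r.
rewrite scaler_sumr; apply: eq_bigr => i _.
by rewrite mono_coefSk -scalerA subSS.
Qed.

Lemma mono_prodSl n k l x y j :
  mono_prod n k l.+1 x y j =
  (if j is j'.+1 then mono_prod n k l x y j' else 0) + n%:R *: mono_prod n.-1 k l x y j.
Proof.
rewrite /mono_prod big_ord_recl.
under eq_bigr do rewrite /bump /= mono_coefSl scalerDl.
rewrite big_split /= addrA; congr (_ + _); last first.
  rewrite scaler_sumr; apply: eq_bigr => i _; rewrite scalerA /bump add1n.
  by congr (_ *: nth 0 (cdDn _ (fprod F _ x y)) j); lia.
transitivity (\sum_(i < l.+2)
    mono_coef n k l i *: nth 0 (cdDn (l.+1 - i) (fprod F (n - k - i) x y)) j).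
  by rewrite [RHS]big_ord_recl /mono_coef !bin0.
rewrite big_ord_recr /= {2}/mono_coef (bin_small (ltnSn l)) muln0 mulr0 scale0r addr0.
case: j => [|j]; [apply: big1 | apply: eq_bigr] => i _; rewrite (@subSn i l (ltn_ord i)) //.
exact: scaler0.
Qed.

Lemma nth_ext_prod n A B N M j :
  (size A <= N)%N -> (size B <= M)%N ->
  nth 0 (ep n A B) j =
  \sum_(k < N) \sum_(l < M) mono_prod n k l (nth 0 A k) (nth 0 B l) j.
Proof.
move=> le_AN le_BM.
have -> : nth 0 (ep n A B) j =
    \sum_(k < size A) \sum_(l < size B) mono_prod n k l (nth 0 A k) (nth 0 B l) j.
  rewrite nth_cdsum; apply: eq_bigr => k _; rewrite nth_cdsum; apply: eq_bigr => l _.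
  rewrite nth_cdsum; apply: eq_bigr => i _.
  by rewrite nth_cdscale /mono_coef !natrM !mulrA.
rewrite (sumr_ord_widen
    (f := fun k => \sum_(l < size B) mono_prod n k l (nth 0 A k) (nth 0 B l) j) le_AN).
  apply: eq_bigr => k _.
  apply: (sumr_ord_widen (f := fun l => mono_prod n k l (nth 0 A k) (nth 0 B l) j) le_BM).
  by move=> l ge_l; rewrite (nth_default 0 ge_l) mono_prod0r.
by move=> k ge_k; rewrite big1 // => l _; rewrite (nth_default 0 ge_k) mono_prod0l.
Qed.

Lemma ext_prod_eql n A A' B : cdeq A A' -> cdeq (ep n A B) (ep n A' B).
Proof.
move=> eqA j.
rewrite !(@nth_ext_prod n _ B (size A + size A') (size B)) ?leq_addr ?leq_addl //.
by apply: eq_bigr => k _; rewrite eqA.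
Qed.

Lemma ext_prod_eqr n A B B' : cdeq B B' -> cdeq (ep n A B) (ep n A B').
Proof.
move=> eqB j.
rewrite !(@nth_ext_prod n A _ (size A) (size B + size B')) ?leq_addr ?leq_addl //.
by apply: eq_bigr => k _; apply: eq_bigr => l _; rewrite eqB.
Qed.

Lemma ext_prod_addl n A A' B :
  cdeq (ep n (cdadd A A') B) (cdadd (ep n A B) (ep n A' B)).
Proof.
move=> j; rewrite nth_cdadd.
rewrite !(@nth_ext_prod n _ B (size A + size A') (size B))
  ?size_cdadd ?geq_max ?leq_addr ?leq_addl //.
rewrite -big_split; apply: eq_bigr => k _; rewrite -big_split; apply: eq_bigr => l _.
by rewrite nth_cdadd mono_prodDl.
Qed.

Lemma ext_prod_addr n A B B' :
  cdeq (ep n A (cdadd B B')) (cdadd (ep n A B) (ep n A B')).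
Proof.
move=> j; rewrite nth_cdadd.
rewrite !(@nth_ext_prod n A _ (size A) (size B + size B'))
  ?size_cdadd ?geq_max ?leq_addr ?leq_addl //.
rewrite -big_split; apply: eq_bigr => k _; rewrite -big_split; apply: eq_bigr => l _.
by rewrite nth_cdadd mono_prodDr.
Qed.

Lemma ext_prod_scalel n a A B : cdeq (ep n (cdscale a A) B) (cdscale a (ep n A B)).
Proof.
move=> j; rewrite nth_cdscale.
rewrite !(@nth_ext_prod n _ B (size A) (size B)) ?size_map //.
rewrite scaler_sumr; apply: eq_bigr => k _; rewrite scaler_sumr; apply: eq_bigr => l _.
by rewrite nth_cdscale mono_prodZl.
Qed.

Lemma ext_prod_scaler n a A B : cdeq (ep n A (cdscale a B)) (cdscale a (ep n A B)).
Proof.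
move=> j; rewrite nth_cdscale.
rewrite !(@nth_ext_prod n A _ (size A) (size B)) ?size_map //.
rewrite scaler_sumr; apply: eq_bigr => k _; rewrite scaler_sumr; apply: eq_bigr => l _.
by rewrite nth_cdscale mono_prodZr.
Qed.

Lemma ext_prod_Dl n A B : cdeq (ep n (cdDn 1 A) B) (cdscale (- n%:R) (ep n.-1 A B)).
Proof.
move=> j; rewrite nth_cdscale.
rewrite (@nth_ext_prod n _ B (size A).+1 (size B)) //.
rewrite (@nth_ext_prod n.-1 A B (size A) (size B)) //.
rewrite big_ord_recl big1 ?add0r => [|l _]; last exact: mono_prod0l.
rewrite scaler_sumr; apply: eq_bigr => k _; rewrite scaler_sumr; apply: eq_bigr => l _.
exact: mono_prodSk.
Qed.

Lemma ext_prod_Dr n A B :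
  cdeq (ep n A (cdDn 1 B)) (cdadd (cdDn 1 (ep n A B)) (cdscale n%:R (ep n.-1 A B))).
Proof.
move=> j; rewrite nth_cdadd nth_cdscale nth_cdDn (@nth_ext_prod n A _ (size A) (size B).+1) //.
rewrite (@nth_ext_prod n.-1 A B (size A) (size B)) //.
case: j => [|j] /=.
  rewrite add0r scaler_sumr; apply: eq_bigr => k _.
  rewrite big_ord_recl mono_prod0r add0r scaler_sumr; apply: eq_bigr => l _.
  by rewrite mono_prodSl add0r.
rewrite subn1 /= (@nth_ext_prod n A B (size A) (size B)) //.
rewrite scaler_sumr -big_split; apply: eq_bigr => k _.
rewrite big_ord_recl mono_prod0r add0r scaler_sumr -big_split; apply: eq_bigr => l _.
exact: mono_prodSl.
Qed.

Section HalfJacobiBase.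
Variable e : K.

Definition half_jacobi0 A B C : Prop := forall m n j,
  nth 0 (ep m A (ep n B C)) j - e *: nth 0 (ep n B (ep m A C)) j =
  binom_sum (fun r p => nth 0 (ep p (ep r A B) C) j) 0 m n.

Lemma half_jacobi0_eqA A A' B C : cdeq A A' -> half_jacobi0 A B C -> half_jacobi0 A' B C.
Proof.
move=> eqA J m n j.
rewrite -(ext_prod_eql _ _ eqA) -(ext_prod_eqr _ _ (ext_prod_eql _ _ eqA)) J.
by apply: eq_bigr => i _; rewrite (ext_prod_eql _ _ (ext_prod_eql _ _ eqA)).
Qed.

Lemma half_jacobi0_eqB A B B' C : cdeq B B' -> half_jacobi0 A B C -> half_jacobi0 A B' C.
Proof.
move=> eqB J m n j.
rewrite -(ext_prod_eqr _ _ (ext_prod_eql _ _ eqB)) -(ext_prod_eql _ _ eqB) J.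
by apply: eq_bigr => i _; rewrite (ext_prod_eql _ _ (ext_prod_eqr _ _ eqB)).
Qed.

Lemma half_jacobi0_eqC A B C C' : cdeq C C' -> half_jacobi0 A B C -> half_jacobi0 A B C'.
Proof.
move=> eqC J m n j.
rewrite -!(ext_prod_eqr _ _ (ext_prod_eqr _ _ eqC)) J.
by apply: eq_bigr => i _; rewrite (ext_prod_eqr _ _ eqC).
Qed.

Lemma half_jacobi0_addA A A' B C :
  half_jacobi0 A B C -> half_jacobi0 A' B C -> half_jacobi0 (cdadd A A') B C.
Proof.
move=> J J' m n j.
rewrite ext_prod_addl nth_cdadd (ext_prod_eqr _ _ (ext_prod_addl _ _ _ _)) ext_prod_addr.
rewrite nth_cdadd scalerDr opprD addrACA J J' -big_split.
apply: eq_bigr => i _.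
by rewrite (ext_prod_eql _ _ (ext_prod_addl _ _ _ _)) ext_prod_addl nth_cdadd scalerDr.
Qed.

Lemma half_jacobi0_addB A B B' C :
  half_jacobi0 A B C -> half_jacobi0 A B' C -> half_jacobi0 A (cdadd B B') C.
Proof.
move=> J J' m n j.
rewrite (ext_prod_eqr _ _ (ext_prod_addl _ _ _ _)) ext_prod_addr ext_prod_addl !nth_cdadd.
rewrite scalerDr opprD addrACA J J' -big_split.
apply: eq_bigr => i _.
by rewrite (ext_prod_eql _ _ (ext_prod_addr _ _ _ _)) ext_prod_addl nth_cdadd scalerDr.
Qed.

Lemma half_jacobi0_addC A B C C' :
  half_jacobi0 A B C -> half_jacobi0 A B C' -> half_jacobi0 A B (cdadd C C').
Proof.
move=> J J' m n j.
rewrite !(ext_prod_eqr _ _ (ext_prod_addr _ _ _ _)) !ext_prod_addr !nth_cdadd.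
rewrite scalerDr opprD addrACA J J' -big_split.
by apply: eq_bigr => i _; rewrite ext_prod_addr nth_cdadd scalerDr.
Qed.

Lemma half_jacobi0_DA A B C : half_jacobi0 A B C -> half_jacobi0 (cdDn 1 A) B C.
Proof.
move=> J m n j.
rewrite ext_prod_Dl (ext_prod_eqr _ _ (ext_prod_Dl _ _ _)) ext_prod_scaler !nth_cdscale.
pose h r p := nth 0 (ep p (ep r A B) C) j.
rewrite /binom_sum (eq_bigr (fun i : 'I_m.+1 =>
  - ('C(m, i)%:R *: (i%:R *: h i.-1 (m + n - i)%N)))); last first.
  move=> i _; rewrite (ext_prod_eql _ _ (ext_prod_Dl _ _ _)) ext_prod_scalel nth_cdscale.
  by rewrite scaleNr scalerN.
by rewrite sumrN binom_sum_pred_fst scalerBCA J scaleNr.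
Qed.

Lemma half_jacobi0_DB A B C : half_jacobi0 A B C -> half_jacobi0 A (cdDn 1 B) C.
Proof.
move=> J m n j.
rewrite (ext_prod_eqr _ _ (ext_prod_Dl _ _ _)) ext_prod_scaler ext_prod_Dl !nth_cdscale.
pose h r p := nth 0 (ep p (ep r A B) C) j.
rewrite /binom_sum (eq_bigr (fun i : 'I_m.+1 =>
  - ('C(m, i)%:R *: ((m + n - i)%:R *: h i (m + n - i).-1)) +
  'C(m, i)%:R *: (i%:R *: h i.-1 (m + n - i)%N))); last first.
  move=> i _; rewrite (ext_prod_eql _ _ (ext_prod_Dr _ _ _)) ext_prod_addl nth_cdadd.
  rewrite ext_prod_Dl ext_prod_scalel !nth_cdscale.
  by rewrite scalerDr scaleNr scalerN.
rewrite big_split /= sumrN binom_sum_pred_snd binom_sum_pred_fst opprD addrAC addNr add0r.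
by rewrite scalerBCA J scaleNr.
Qed.

Lemma half_jacobi0_DC A B C : half_jacobi0 A B C -> half_jacobi0 A B (cdDn 1 C).
Proof.
move=> J m n j.
rewrite !(ext_prod_eqr _ _ (ext_prod_Dr _ _ _)) !ext_prod_addr !nth_cdadd.
rewrite !ext_prod_Dr !nth_cdadd !ext_prod_scaler !nth_cdscale.
have regroup (a b c a' b' c' : S) :
    a + b + c - e *: (a' + c' + b') = (a - e *: a') + (b - e *: b') + (c - e *: c').
  by rewrite (addrAC a') scalerDr opprD addrACA scalerDr opprD [X in X + _]addrACA.
pose h r p := nth 0 (ep p (ep r A B) C) j.
rewrite regroup /binom_sum (eq_bigr (fun i : 'I_m.+1 =>
  'C(m, i)%:R *: nth 0 (cdDn 1 (ep (m + n - i) (ep i A B) C)) j +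
  'C(m, i)%:R *: ((m + n - i)%:R *: h i (m + n - i).-1))); last first.
  by move=> i _; rewrite ext_prod_Dr nth_cdadd nth_cdscale scalerDr.
rewrite big_split /= binom_sum_pred_snd [RHS]addrA !scalerBCA !J.
congr (_ + _ + _); clear h.
case: j J => [|j] J /=; first by rewrite scaler0 subr0 big1 // => i _; rewrite scaler0.
exact: J.
Qed.

End HalfJacobiBase.

Lemma cd_hom1 b x : par F b x -> cd_hom F b [:: x].
Proof. by move=> hx [|j] //=; rewrite nth_nil; exact: par_0. Qed.

Lemma cd_hom_ind b (Q : seq S -> Prop) :
  (forall A A', cdeq A A' -> Q A -> Q A') ->
  (forall A A', Q A -> Q A' -> Q (cdadd A A')) ->
  (forall A, Q A -> Q (cdDn 1 A)) ->
  (forall x, par F b x -> Q [:: x]) ->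
  forall A, cd_hom F b A -> Q A.
Proof.
move=> Qeq Qadd QD Q1; elim=> [|x A IHA] hA.
  by apply: (Qeq [:: 0]); [case=> [|[]] | exact/Q1/par_0].
apply: (Qeq (cdadd [:: x] (cdDn 1 A))).
  by case=> [|j]; rewrite nth_cdadd nth_cdDn /= ?addr0 ?nth_nil ?add0r ?subn1.
apply: Qadd; first exact/Q1/(hA 0%N).
by apply/QD/IHA => j; exact: (hA j.+1).
Qed.

Lemma half_jacobi0_hom a b c A B C :
  formula_jacobi_cond F -> cd_hom F a A -> cd_hom F b B -> cd_hom F c C ->
  half_jacobi0 (@eps K a b) A B C.
Proof.
move=> cond; set e := @eps K a b.
have base x y z : par F a x -> par F b y -> par F c z -> half_jacobi0 e [:: x] [:: y] [:: z].
  move=> hx hy hz m n j; have := cond a b c x y z hx hy hz m n j.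
  rewrite nth_cdadd nth_cdscale nth_cdsum scaleNr => ->.
  by apply: eq_bigr => i _; rewrite nth_cdscale.
have onA y z : par F b y -> par F c z ->
    forall A, cd_hom F a A -> half_jacobi0 e A [:: y] [:: z].
  move=> hy hz; apply: cd_hom_ind.
  - by move=> X X' eqX JX; apply: half_jacobi0_eqA eqX JX.
  - by move=> X X' JX JX'; apply: half_jacobi0_addA JX JX'.
  - by move=> X JX; apply: half_jacobi0_DA JX.
  - by move=> x hx; apply: base.
have onB z : par F c z ->
    forall B, cd_hom F b B -> forall A, cd_hom F a A -> half_jacobi0 e A B [:: z].
  move=> hz; apply: cd_hom_ind.
  - by move=> X X' eqX JX Y hY; apply: half_jacobi0_eqB eqX (JX Y hY).
  - by move=> X X' JX JX' Y hY; apply: half_jacobi0_addB (JX Y hY) (JX' Y hY).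
  - by move=> X JX Y hY; apply: half_jacobi0_DB (JX Y hY).
  - by move=> y hy; apply: onA.
have onC : forall C, cd_hom F c C ->
    forall B, cd_hom F b B -> forall A, cd_hom F a A -> half_jacobi0 e A B C.
  apply: cd_hom_ind.
  - by move=> X X' eqX JX Z hZ Y hY; apply: half_jacobi0_eqC eqX (JX Z hZ Y hY).
  - by move=> X X' JX JX' Z hZ Y hY; apply: half_jacobi0_addC (JX Z hZ Y hY) (JX' Z hZ Y hY).
  - by move=> X JX Z hZ Y hY; apply: half_jacobi0_DC (JX Z hZ Y hY).
  - by move=> z hz; apply: onB.
by move=> hA hB hC; apply: onC.
Qed.

Lemma ext_half_jacobi_formula_cond : ext_half_jacobi F -> formula_jacobi_cond F.
Proof.
move=> HJ a b c u v w hu hv hw m n j.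
move: (HJ a b c _ _ _ (cd_hom1 hu) (cd_hom1 hv) (cd_hom1 hw) 0%N m n j).
rewrite !nth_cdsum big_ord1 /= nth_cdscale !nth_cdadd !nth_cdscale.
rewrite expr0 bin0 mul1r mulr1 scale1r !addn0 !subn0 => ->.
by apply: eq_bigr => i _; rewrite !nth_cdscale.
Qed.

Lemma formula_cond_ext_half_jacobi : formula_jacobi_cond F -> ext_half_jacobi F.
Proof.
move=> cond a b c A B C hA hB hC k m n j.
have J := half_jacobi0_hom cond hA hB hC.
rewrite !nth_cdsum; under [in RHS]eq_bigr do rewrite nth_cdscale.
have := half_jacobi_from_base (f := fun p q => nth 0 (ep p A (ep q B C)) j)
  (f' := fun p q => nth 0 (ep p B (ep q A C)) j) (fun p q => J p q j) k m n.
rewrite /binom_sum /alt_binom_sum => <-.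
rewrite scaler_sumr -sumrB; apply: eq_bigr => i _.
by rewrite nth_cdscale nth_cdadd nth_cdscale scaleNr scalerBCA.
Qed.

End ExtendedProducts.

Theorem proposition7p7 (K : fieldType) (S : lmodType K) (F : formula S) :
  ext_half_jacobi F <-> formula_jacobi_cond F.
Proof.
by split; [exact: ext_half_jacobi_formula_cond | exact: formula_cond_ext_half_jacobi].
Qed.
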